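(* Let $f\in\mathbb{C}[h]$, $\lambda\in S_f$ and $\dot z\in\mathbb{C}$. (1) The formulas defining $A_{\mathcal{H}(f)}(\lambda,\dot z)$ and $B_{\mathcal{H}(f)}(\lambda,\dot z)$ give $\mathcal{H}(f)$-module structures on $\mathbb{C}[t,t^{-1}]$. (2) $A_{\mathcal{H}(f)}(\lambda,\dot z)$ (resp. $B_{\mathcal{H}(f)}(\lambda,\dot z)$) is a simple $\mathcal{H}(f)$-module if and only if $\lambda(i)+\dot z\neq 0$ for all $i\in\mathbb{Z}$ and $|\lambda|=0$. (3) Suppose $\lambda(i)+\dot z\neq 0$ for all $i\in\mathbb{Z}$ and $m=|\lambda|\neq 0$. Then every nonzero submodule of $A_{\mathcal{H}(f)}(\lambda,\dot z)$ (resp. $B_{\mathcal{H}(f)}(\lambda,\dot z)$) equals $\mathbb{C}[t,t^{-1}]g(t)$ for some nonzero $g(t)\in\mathbb{C}[t^m]$ which is an eigenvector of $h$. In particular, every maximal proper nonzero submodule of $A_{\mathcal{H}(f)}(\lambda,\dot z)$ equals $\mathbb{C}[t,t^{-1}](t^m-a)$ for some $a\in\mathbb{C}^*$.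
   Context: For $f(h)\in\mathbb{C}[h]$, $\mathcal{H}(f)$ is the unital associative $\mathbb{C}$-algebra generated by $x,y,h$ with relations $hx=xf(h)$, $yh=f(h)y$, $yx-xy=f(h)-h$. $S_f$ is the set of maps $\lambda:\mathbb{Z}\to\mathbb{C}$ with $f(\lambda(i))=\lambda(i+1)$ for all $i$; $|\lambda|$ is the nonnegative generator of the subgroup $\{m\in\mathbb{Z}\mid\lambda(i+m)=\lambda(i)\ \forall i\}$. For $\lambda\in S_f$, $\dot z\in\mathbb{C}$: $A_{\mathcal{H}(f)}(\lambda,\dot z)$ is the space $\mathbb{C}[t,t^{-1}]$ with $ht^i=\lambda(i)t^i$, $xt^i=t^{i+1}$, $yt^i=(\lambda(i)+\dot z)t^{i-1}$; $B_{\mathcal{H}(f)}(\lambda,\dot z)$ is the space $\mathbb{C}[t,t^{-1}]$ with $ht^i=\lambda(i)t^i$, $xt^i=(\lambda(i+1)+\dot z)t^{i+1}$, $yt^i=t^{i-1}$ ($i\in\mathbb{Z}$). *)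

(* C is modelled by algC (algebraically closed field of char 0). *)
From HB Require Import structures.
From mathcomp Require Import all_boot all_order all_algebra all_field.
Set Implicit Arguments. Unset Strict Implicit. Unset Printing Implicit Defensive.
Import Order.TTheory GRing.Theory Num.Theory.
Local Open Scope ring_scope.

(* Vectors: coefficient functions Z -> C; a Laurent polynomial sum_i v(i) t^i
   is such a function with finite support. *)
Definition vec := int -> algC.

Definition laurent (v : vec) : Prop :=
  exists N : nat, forall i : int, (N < absz i)%N -> v i = 0.

Definition vzero : vec := fun _ => 0.
Definition vadd (v w : vec) : vec := fun i => v i + w i.
Definition vscale (c : algC) (v : vec) : vec := fun i => c * v i.
Definition vsub (v w : vec) : vec := fun i => v i - w i.

Definition op_poly (p : {poly algC}) (T : vec -> vec) (v : vec) : vec :=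
  fun i => \sum_(k < size p) p`_k * iter k T v i.

Definition in_Sf (f : {poly algC}) (lam : int -> algC) : Prop :=
  forall i : int, f.[lam i] = lam (i + 1).

(* |lambda| = m : m is the nonnegative generator of the group of periods. *)
Definition is_abs_period (lam : int -> algC) (m : nat) : Prop :=
  forall k : int, (forall i : int, lam (i + k) = lam i) <-> (m%:Z %| k)%Z.

Definition is_Hf_module (f : {poly algC}) (X Y H : vec -> vec) : Prop :=
  laurent vzero /\
  (forall v w, laurent v -> laurent w -> laurent (vadd v w)) /\
  (forall c v, laurent v -> laurent (vscale c v)) /\
  (forall T, (T = X \/ T = Y \/ T = H) ->
     (forall v, laurent v -> laurent (T v)) /\
     (forall v w, laurent v -> laurent w -> T (vadd v w) = vadd (T v) (T w)) /\
     (forall c v, laurent v -> T (vscale c v) = vscale c (T v))) /\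
  (forall v, laurent v -> H (X v) = X (op_poly f H v)) /\
  (forall v, laurent v -> Y (H v) = op_poly f H (Y v)) /\
  (forall v, laurent v ->
     vsub (Y (X v)) (X (Y v)) = vsub (op_poly f H v) (H v)).

Definition Hop (lam : int -> algC) (v : vec) : vec := fun i => lam i * v i.
Definition A_x (v : vec) : vec := fun i => v (i - 1).
Definition A_y (lam : int -> algC) (z : algC) (v : vec) : vec :=
  fun i => (lam (i + 1) + z) * v (i + 1).
Definition B_x (lam : int -> algC) (z : algC) (v : vec) : vec :=
  fun i => (lam i + z) * v (i - 1).
Definition B_y (v : vec) : vec := fun i => v (i + 1).

Definition is_submodule (X Y H : vec -> vec) (S : vec -> Prop) : Prop :=
  (forall v, S v -> laurent v) /\ S vzero /\
  (forall v w, S v -> S w -> S (vadd v w)) /\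
  (forall c v, S v -> S (vscale c v)) /\
  (forall v, S v -> S (X v)) /\ (forall v, S v -> S (Y v)) /\
  (forall v, S v -> S (H v)).

Definition nonzero_sub (S : vec -> Prop) : Prop := exists v, S v /\ v <> vzero.
Definition proper_sub (S : vec -> Prop) : Prop := exists v, laurent v /\ ~ S v.

Definition is_simple (X Y H : vec -> vec) : Prop :=
  (exists v, laurent v /\ v <> vzero) /\
  forall S, is_submodule X Y H S ->
    (forall v, S v -> v = vzero) \/ (forall v, laurent v -> S v).

Definition is_max_sub (X Y H : vec -> vec) (S : vec -> Prop) : Prop :=
  is_submodule X Y H S /\ nonzero_sub S /\ proper_sub S /\
  forall S', is_submodule X Y H S' -> (forall v, S v -> S' v) -> proper_sub S' ->
    forall v, S' v <-> S v.

(* The Laurent polynomial t^(-n) P(t) for P in C[t]. *)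
Definition shiftp (n : nat) (P : {poly algC}) : vec :=
  fun i => if (0 <= i + n%:Z) then P`_(absz (i + n%:Z)) else 0.

(* The subspace C[t,t^-1] G of C[t,t^-1], for G in C[t]. *)
Definition laurent_mult_of (G : {poly algC}) (v : vec) : Prop :=
  exists (n : nat) (r : {poly algC}), v = shiftp n (r * G).

(* All operators of A(λ,ż) and B(λ,ż) act on coefficient sequences as weighted
   shifts, and h multiplies the coefficient of t^i by λ(i).  If λ(i) + ż never
   vanishes, x and y shift with nonzero weights, so inside a nonzero submodule one
   may shift an element and subtract an h-eigencomponent until its support lies in
   one residue class modulo |λ|: for |λ| = m > 0 the recursion λ(i+1) = f(λ(i))
   makes λ(i) = λ(j) equivalent to m | i - j, and for |λ| = 0 a suitable shift
   separates any two indices.  For |λ| = 0 this produces a monomial, which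
   generates everything.  For |λ| = m > 0, a class-0 element g(t) ∈ C[t^m] of
   shortest support generates the submodule, since the remainder of any element
   modulo g is again an element, of shorter support, hence zero.  Conversely a
   zero of λ + ż gives a submodule of truncated Laurent polynomials and a period
   k ≠ 0 the proper submodule C[t,t^-1](t^|k| - 1); a maximal submodule
   C[t,t^-1]g is C[t,t^-1](t^m - a) for a nonzero root a of g viewed in t^m. *)

From Pilot Require Import Defs.
From HB Require Import structures.
From mathcomp Require Import all_boot all_order all_algebra all_field.
From mathcomp Require Import zify ring.
From Stdlib Require Import FunctionalExtensionality Classical Wf_nat.
Import Order.TTheory GRing.Theory Num.Theory.
Set Implicit Arguments. Unset Strict Implicit. Unset Printing Implicit Defensive.
Local Open Scope ring_scope.

(** * Weighted shifts and the module structure *)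

Lemma vec_ext (v w : vec) : (forall i, v i = w i) -> v = w.
Proof. exact: functional_extensionality. Qed.

Lemma vec_neq0P (v : vec) : v <> vzero -> exists i, v i != 0.
Proof.
move=> nz_v; apply: NNPP => nex; apply: nz_v; apply: vec_ext => i.
by have [//|nz] := eqVneq (v i) 0; case: nex; exists i.
Qed.

Definition sh (k : int) (v : vec) : vec := fun i => v (i - k).
Definition delta (j : int) : vec := fun i => if i == j then 1 else 0.

Lemma sh0 v : sh 0 v = v.
Proof. by apply: vec_ext => i; rewrite /sh subr0. Qed.

Lemma sh_sh a b v : sh a (sh b v) = sh (a + b) v.
Proof. by apply: vec_ext => i; rewrite /sh opprD addrA. Qed.

Lemma vscaleK a : a != 0 -> cancel (vscale a) (vscale a^-1).
Proof. by move=> nz_a v; apply: vec_ext => i; rewrite /vscale mulrA mulVf ?mul1r. Qed.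

Lemma laurent_vzero : laurent vzero. Proof. by exists 0%N. Qed.

Lemma laurent_vadd v w : laurent v -> laurent w -> laurent (vadd v w).
Proof.
move=> [N vN] [M wM]; exists (maxn N M) => i ?.
by rewrite /vadd vN ?wM ?addr0 //; lia.
Qed.

(* d = -1 multiplies by t, d = 1 divides by t. *)
Definition weighted_shift (T : vec -> vec) (c : int -> algC) (d : int) :=
  forall v i, T v i = c i * v (i + d).

Section WeightedShift.
Variables (T : vec -> vec) (c : int -> algC) (d : int).
Hypothesis wT : weighted_shift T c d.

Lemma weighted_shift_laurent v : laurent v -> laurent (T v).
Proof. by move=> [N vN]; exists (N + `|d|)%N => i ?; rewrite wT vN ?mulr0 //; lia. Qed.

Lemma weighted_shift_add v w : T (vadd v w) = vadd (T v) (T w).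
Proof. by apply: vec_ext => i; rewrite /vadd !wT mulrDr. Qed.

Lemma weighted_shift_scale a v : T (vscale a v) = vscale a (T v).
Proof. by apply: vec_ext => i; rewrite /vscale !wT mulrCA. Qed.

Lemma weighted_shift_zero : T vzero = vzero.
Proof. by apply: vec_ext => i; rewrite wT mulr0. Qed.

Lemma weighted_shift_linear :
  (forall v, laurent v -> laurent (T v)) /\
  (forall v w, laurent v -> laurent w -> T (vadd v w) = vadd (T v) (T w)) /\
  (forall a v, laurent v -> T (vscale a v) = vscale a (T v)).
Proof.
split; first exact: weighted_shift_laurent.
by split=> [v w _ _ | a v _]; [exact: weighted_shift_add | exact: weighted_shift_scale].
Qed.

End WeightedShift.

Lemma A_x_weighted_shift : weighted_shift A_x (fun=> 1) (-1).
Proof. by move=> v i; rewrite mul1r. Qed.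

Lemma A_y_weighted_shift lam z :
  weighted_shift (A_y lam z) (fun i => lam (i + 1) + z) 1.
Proof. by []. Qed.

Lemma B_x_weighted_shift lam z : weighted_shift (B_x lam z) (fun i => lam i + z) (-1).
Proof. by []. Qed.

Lemma B_y_weighted_shift : weighted_shift B_y (fun=> 1) 1.
Proof. by move=> v i; rewrite mul1r. Qed.

Lemma Hop_weighted_shift lam : weighted_shift (Hop lam) lam 0.
Proof. by move=> v i; rewrite addr0. Qed.

Lemma vscale_weighted_shift a : weighted_shift (vscale a) (fun=> a) 0.
Proof. by move=> v i; rewrite addr0. Qed.

Lemma laurent_vscale a v : laurent v -> laurent (vscale a v).
Proof. exact: weighted_shift_laurent (vscale_weighted_shift a) v. Qed.

Lemma op_poly_Hop f lam v : op_poly f (Hop lam) v = fun i => f.[lam i] * v i.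
Proof.
have iterH k : iter k (Hop lam) v = fun i => lam i ^+ k * v i.
  by elim: k => [|k IH] /=; apply: vec_ext => i; rewrite ?IH /Hop ?mul1r // exprS mulrA.
apply: vec_ext => i; rewrite /op_poly horner_coef big_distrl /=.
by apply: eq_bigr => k _; rewrite iterH mulrA.
Qed.

Lemma Hf_module_of_weighted_shifts f lam X cX dX Y cY dY :
  weighted_shift X cX dX -> weighted_shift Y cY dY ->
  (forall v, Hop lam (X v) = X (op_poly f (Hop lam) v)) ->
  (forall v, Y (Hop lam v) = op_poly f (Hop lam) (Y v)) ->
  (forall v, vsub (Y (X v)) (X (Y v)) = vsub (op_poly f (Hop lam) v) (Hop lam v)) ->
  is_Hf_module f X Y (Hop lam).
Proof.
move=> wX wY HX YH YX; split; first exact: laurent_vzero.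
split; first exact: laurent_vadd.
split; first exact: laurent_vscale.
split; last by split; [|split] => v _.
move=> T [->|[->|->]]; apply: weighted_shift_linear;
  [exact: wX | exact: wY | exact: Hop_weighted_shift].
Qed.

Lemma A_Hf_module f lam z : in_Sf f lam -> is_Hf_module f A_x (A_y lam z) (Hop lam).
Proof.
move=> hf; apply: (Hf_module_of_weighted_shifts A_x_weighted_shift (A_y_weighted_shift lam z))
  => v; rewrite op_poly_Hop; apply: vec_ext => i.
- by rewrite /Hop /A_x hf subrK.
- by rewrite /Hop /A_y hf; ring.
- by rewrite /vsub /Hop /A_y /A_x subrK addrK hf; ring.
Qed.

Lemma B_Hf_module f lam z : in_Sf f lam -> is_Hf_module f (B_x lam z) B_y (Hop lam).
Proof.
move=> hf; apply: (Hf_module_of_weighted_shifts (B_x_weighted_shift lam z) B_y_weighted_shift)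
  => v; rewrite op_poly_Hop; apply: vec_ext => i.
- by rewrite /Hop /B_x hf subrK; ring.
- by rewrite /Hop /B_y hf; ring.
- by rewrite /vsub /Hop /B_y /B_x addrK subrK hf; ring.
Qed.

(** * Reduction to one residue class *)

Record Hsubspace (lam : int -> algC) (S : vec -> Prop) : Prop := {
  Hsubspace_laurent : forall v, S v -> laurent v;
  Hsubspace0 : S vzero;
  Hsubspace_add : forall v w, S v -> S w -> S (vadd v w);
  Hsubspace_scale : forall a v, S v -> S (vscale a v);
  Hsubspace_H : forall v, S v -> S (Hop lam v) }.

Lemma submodule_Hsubspace X Y lam S :
  is_submodule X Y (Hop lam) S -> Hsubspace lam S.
Proof. by move=> [? [? [? [? [_ [_ ?]]]]]]. Qed.

Definition supp_in (v : vec) (a : int) (n : nat) : Prop :=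
  forall i, v i != 0 -> a <= i < a + n%:Z.

Definition in_class (m b : int) (v : vec) : Prop :=
  forall i, v i != 0 -> (m %| i - b)%Z.

Definition shifted_copy (k : int) (v w : vec) : Prop :=
  exists2 c : int -> algC, (forall l, c l != 0) & forall l, w (l + k) = c l * v l.

Definition shiftable (S : vec -> Prop) : Prop :=
  forall k v, S v -> exists2 w, S w & shifted_copy k v w.

Definition separates (lam : int -> algC) (m : int) : Prop :=
  forall i j, ~~ (m %| i - j)%Z -> exists k, lam (i + k) != lam (j + k).

Lemma laurent_supp v : laurent v -> exists N : nat, supp_in v (- N%:Z) (N + N).+1.
Proof. by move=> [N vN]; exists N => i; apply: contraNT => ?; rewrite vN //; lia. Qed.

Lemma shifted_copy_trans k1 k2 u v w :
  shifted_copy k1 u v -> shifted_copy k2 v w -> shifted_copy (k1 + k2) u w.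
Proof.
move=> [c1 nz_c1 uv] [c2 nz_c2 vw]; exists (fun l => c2 (l + k1) * c1 l).
  by move=> l; rewrite mulf_neq0.
by move=> l; rewrite addrA vw uv mulrA.
Qed.

Lemma weighted_shift_copy T c d v :
  weighted_shift T c d -> (forall i, c i != 0) -> shifted_copy (- d) v (T v).
Proof. by move=> wT nz_c; exists (fun l => c (l - d)) => // l; rewrite wT subrK. Qed.

Lemma shiftable_of_steps S :
  (forall v, S v -> exists2 w, S w & shifted_copy 1 v w) ->
  (forall v, S v -> exists2 w, S w & shifted_copy (-1) v w) -> shiftable S.
Proof.
move=> up down k v Sv; elim/int_rect: k => [|n [w Sw vw]|n [w Sw vw]].
- by exists v => //; exists (fun=> 1) => [l|l]; rewrite ?oner_neq0 ?addr0 ?mul1r.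
- have [w' Sw' ww'] := up w Sw; exists w' => //.
  by rewrite -addn1 PoszD; exact: shifted_copy_trans vw ww'.
- have [w' Sw' ww'] := down w Sw; exists w' => //.
  by rewrite -addn1 PoszD opprD; exact: shifted_copy_trans vw ww'.
Qed.

Lemma class_reduction lam m S : Hsubspace lam S -> shiftable S -> separates lam m ->
  forall n a v, S v -> v <> vzero -> supp_in v a n ->
  exists w b a', [/\ S w, w <> vzero, in_class m b w & supp_in w a' n].
Proof.
move=> hS shS sep; elim=> [|n IH] a v Sv nz_v v_a.
  by have [i /v_a] := vec_neq0P nz_v; lia.
have [v_cl|not_cl] := classic (in_class m a v); first by exists v, a, a.
have [j nz_vj ndiv] : exists2 j, v j != 0 & ~~ (m %| j - a)%Z.
  apply: NNPP => nex; apply: not_cl => j nz_vj; apply/negPn/negP => ndiv.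
  by apply: nex; exists j.
have [k neq_lam] := sep j a ndiv.
have [w Sw [c nz_c vw]] := shS k v Sv.
(* Applying h - lam(a + k) kills the coefficient at a + k and keeps the one at j + k. *)
pose w' := vadd (Hop lam w) (vscale (- lam (a + k)) w).
have w'E l : w' (l + k) = (lam (l + k) - lam (a + k)) * (c l * v l).
  by rewrite /w' /vadd /Hop /vscale vw; ring.
have [|||u [b [a' [Su nz_u u_cl u_a']]]] := IH (a + k + 1) w'.
- by apply: Hsubspace_add hS _ _ (Hsubspace_H hS Sw) (Hsubspace_scale hS _ Sw).
- move=> w'0; have := w'E j; rewrite w'0 /vzero => /esym/eqP.
  by rewrite !mulf_eq0 subr_eq0 (negbTE neq_lam) (negbTE (nz_c j)) (negbTE nz_vj).
- move=> i; rewrite -(subrK k i) w'E !mulf_eq0 !negb_or subr_eq0.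
  move=> /andP[neq /andP[_ /v_a]]; have : i - k != a by apply: contraNneq neq => ->.
  lia.
- by exists u, b, a'; split=> // i /u_a'; lia.
Qed.

Definition periodic_mod (m : int) (c : int -> algC) : Prop :=
  forall i j, (m %| i - j)%Z -> c i = c j.

Lemma periodic_mod_of_period lam k :
  (forall i, lam (i + k) = lam i) -> periodic_mod k lam.
Proof.
move=> per i j /dvdzP[q eq_q]; rewrite -(subrK j i) eq_q addrC {i eq_q}.
have perN (n : nat) l : lam (l + n%:Z * k) = lam l.
  by elim: n => [|n IH]; rewrite ?mul0r ?addr0 // -addn1 PoszD mulrDl mul1r addrA per.
elim/int_rect: q => [|n _|n _]; first by rewrite mul0r addr0.
  exact: perN.
by have := perN n.+1 (j + - n.+1%:Z * k); rewrite !mulNr subrK => ->.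
Qed.

Lemma periodic_mod_abs_period lam m : is_abs_period lam m -> periodic_mod m%:Z lam.
Proof. by move=> per i j /(per _).2 e; rewrite -[i](subrK j) addrC e. Qed.

Lemma abs_period_dvd f lam m : in_Sf f lam -> is_abs_period lam m -> (0 < m)%N ->
  forall i j, lam i = lam j -> (m%:Z %| i - j)%Z.
Proof.
move=> hf per m_gt0 i j eq_ij; apply: (per _).1 => l.
have fwd (n : nat) : lam (i + n%:Z) = lam (j + n%:Z).
  elim: n => [|n IH]; first by rewrite !addr0.
  by rewrite -addn1 PoszD !addrA -!hf IH.
(* f only propagates equalities forwards, so first move l past j by a multiple of m. *)
pose M : int := absz (l - j).
have sameM x : lam (x + M * m%:Z) = lam x.
  by apply: periodic_mod_abs_period per _ _ _; rewrite addrC addKr; apply: dvdz_mull.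
have Mge : 0 <= l - j + M * m%:Z by rewrite /M; nia.
rewrite -sameM -[in RHS]sameM; pose n := absz (l - j + M * m%:Z).
have n_eq : n%:Z = l - j + M * m%:Z by rewrite gez0_abs.
have -> : l + (i - j) + M * m%:Z = i + n%:Z by rewrite n_eq; ring.
by have -> : l + M * m%:Z = j + n%:Z by rewrite n_eq; ring.
Qed.

Lemma separates_periodic f lam m : in_Sf f lam -> is_abs_period lam m -> (0 < m)%N ->
  separates lam m%:Z.
Proof.
move=> hf per m_gt0 i j ndiv; exists 0; rewrite !addr0.
by apply: contraNneq ndiv; exact: abs_period_dvd.
Qed.

Lemma separates_aperiodic lam : is_abs_period lam 0 -> separates lam 0.
Proof.
move=> aper i j; rewrite dvd0z subr_eq0 => neq_ij; apply: NNPP => same.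
have per l : lam (l + (i - j)) = lam l.
  apply: NNPP => neq; apply: same; exists (l - j).
  have -> : i + (l - j) = l + (i - j) by ring.
  by rewrite [j + _]addrC subrK; apply/eqP.
by have := (aper _).1 per; rewrite dvd0z subr_eq0 (negbTE neq_ij).
Qed.

Lemma nonzero_period lam : ~ is_abs_period lam 0 ->
  exists2 k : int, k != 0 & forall i, lam (i + k) = lam i.
Proof.
move=> not_aper; apply: NNPP => nex; apply: not_aper => k; rewrite dvd0z; split.
  by move=> per; apply/negPn/negP => nz_k; apply: nex; exists k.
by move=> /eqP-> i; rewrite addr0.
Qed.

(** * Laurent multiples of a polynomial *)

Lemma in_class_sh m b k w : in_class m b w -> in_class m (b + k) (sh k w).
Proof. by move=> w_cl i /w_cl; rewrite opprD addrA addrAC. Qed.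

Lemma weighted_shift_on_class T c d m b w : weighted_shift T c d -> periodic_mod m c ->
  in_class m b w -> T w = vscale (c (b - d)) (sh (- d) w).
Proof.
move=> wT pc w_cl; apply: vec_ext => i; rewrite wT /vscale /sh opprK.
have [->|/w_cl dvd] := eqVneq (w (i + d)) 0; first by rewrite !mulr0.
by rewrite (pc i (b - d)) // opprB addrA.
Qed.

Lemma shiftp_sh n P : shiftp n P = sh (- n%:Z) (shiftp 0 P).
Proof. by apply: vec_ext => i; rewrite /shiftp /sh opprK addr0. Qed.

Lemma shiftp0_XnM k P : shiftp 0 ('X^k * P) = sh k%:Z (shiftp 0 P).
Proof.
apply: vec_ext => i; rewrite /shiftp /sh !addr0 coefXnM.
case: ifP => i_ge; case: ifP => i_ge'; try case: ifP => lt; try (exfalso; lia); try done.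
by congr (P`_ _); lia.
Qed.

Lemma shiftp_add n P Q : shiftp n (P + Q) = vadd (shiftp n P) (shiftp n Q).
Proof. by apply: vec_ext => i; rewrite /shiftp /vadd; case: ifP; rewrite ?coefD ?addr0. Qed.

Lemma shiftp_scale n c P : shiftp n (c%:P * P) = vscale c (shiftp n P).
Proof. by apply: vec_ext => i; rewrite /shiftp /vscale; case: ifP; rewrite ?coefCM ?mulr0. Qed.

Lemma shiftp_poly0 n : shiftp n 0 = vzero.
Proof. by apply: vec_ext => i; rewrite /shiftp; case: ifP; rewrite ?coef0. Qed.

Lemma shiftp_XnM n k P : shiftp (n + k) ('X^k * P) = shiftp n P.
Proof. by rewrite (shiftp_sh (n + k)) (shiftp_sh n) shiftp0_XnM sh_sh PoszD opprD addrNK. Qed.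

Lemma laurent_shiftp n P : laurent (shiftp n P).
Proof.
exists (n + size P)%N => i i_gt; rewrite /shiftp; case: ifP => // _.
have : (size P <= absz (i + n%:Z)%R)%N by lia.
by move=> ?; rewrite nth_default.
Qed.

Lemma supp_shiftp n P : supp_in (shiftp n P) (- n%:Z) (size P).
Proof.
move=> i; rewrite /shiftp; case: ifP => [i_ge nz|]; last by rewrite eqxx.
have : (absz (i + n%:Z)%R < size P)%N.
  by apply: contraNT nz; rewrite -leqNgt => /(nth_default 0)->.
lia.
Qed.

Lemma shiftp_inj n : injective (shiftp n).
Proof.
move=> P Q eq_PQ; apply/polyP => l.
by have := congr1 (fun v => v (l%:Z - n%:Z)) eq_PQ; rewrite /shiftp subrK.
Qed.

Lemma shiftp_of_supp v N n : supp_in v (- N%:Z) n ->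
  exists2 V : {poly algC}, v = shiftp N V & (size V <= n)%N.
Proof.
move=> v_N; exists (\poly_(i < n) v (i%:Z - N%:Z)); last exact: size_poly.
apply: vec_ext => i; rewrite /shiftp coef_poly.
case: ifP => [i_ge|i_lt]; first case: ifP => [_|i_gt].
- by rewrite gez0_abs // addrK.
- by apply/eqP; apply: contraFT i_gt => /v_N; lia.
- by apply/eqP; apply: contraFT i_lt => /v_N; lia.
Qed.

Lemma delta0_shiftp n : delta 0 = shiftp n 'X^n.
Proof.
apply: vec_ext => i; rewrite /delta /shiftp coefXn.
have [->|nz_i] := eqVneq i 0; first by rewrite add0r le0z_nat eqxx.
case: ifP => // i_ge.
by have -> : (absz (i + n%:Z)%R == n) = false by apply/eqP; lia.
Qed.

Lemma laurent_mult_ind G (P : vec -> Prop) :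
  P vzero -> (forall v w, P v -> P w -> P (vadd v w)) ->
  (forall a v, P v -> P (vscale a v)) -> (forall k, P (sh k (shiftp 0 G))) ->
  forall v, laurent_mult_of G v -> P v.
Proof.
move=> P0 Padd Pscale Psh v [n [r ->]]; rewrite shiftp_sh.
elim/poly_ind: r (- n%:Z) => [|r c IH] k; first by rewrite mul0r shiftp_poly0.
rewrite mulrDl mulrAC [_ * 'X]mulrC shiftp_add shiftp_scale.
have := shiftp0_XnM 1 (r * G); rewrite expr1 => ->.
have -> : sh k (vadd (sh 1 (shiftp 0 (r * G))) (vscale c (shiftp 0 G))) =
  vadd (sh (k + 1) (shiftp 0 (r * G))) (vscale c (sh k (shiftp 0 G))) by rewrite -sh_sh.
exact: Padd (IH _) (Pscale _ _ (Psh _)).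
Qed.

Lemma laurent_mult_laurent G v : laurent_mult_of G v -> laurent v.
Proof. by move=> [n [r ->]]; exact: laurent_shiftp. Qed.

Lemma laurent_mult_zero G : laurent_mult_of G vzero.
Proof. by exists 0%N, 0; rewrite mul0r shiftp_poly0. Qed.

Lemma laurent_mult_add G v w :
  laurent_mult_of G v -> laurent_mult_of G w -> laurent_mult_of G (vadd v w).
Proof.
move=> [n1 [r1 ->]] [n2 [r2 ->]]; exists (n1 + n2)%N, ('X^n2 * r1 + 'X^n1 * r2).
by rewrite mulrDl shiftp_add -!mulrA shiftp_XnM addnC shiftp_XnM.
Qed.

Lemma laurent_mult_scale G a v : laurent_mult_of G v -> laurent_mult_of G (vscale a v).
Proof. by move=> [n [r ->]]; exists n, (a%:P * r); rewrite -mulrA shiftp_scale. Qed.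

Lemma laurent_mult_sh G k : laurent_mult_of G (sh k (shiftp 0 G)).
Proof.
have [j j_eq] : exists j : nat, j%:Z = k + (absz k)%:Z.
  by exists (absz (k + (absz k)%:Z)); rewrite gez0_abs //; lia.
exists (absz k), 'X^j; rewrite (shiftp_sh `|k|) shiftp0_XnM sh_sh j_eq.
by rewrite addrC addrK.
Qed.

Lemma laurent_mult_dvd P G v : laurent_mult_of (P * G) v -> laurent_mult_of G v.
Proof. by move=> [n [r ->]]; exists n, (r * P); rewrite mulrA. Qed.

Lemma laurent_mult_stable T c d m G : weighted_shift T c d -> periodic_mod m c ->
  in_class m 0 (shiftp 0 G) -> forall v, laurent_mult_of G v -> laurent_mult_of G (T v).
Proof.
move=> wT pc G_cl; apply: laurent_mult_ind.
- by rewrite (weighted_shift_zero wT); exact: laurent_mult_zero.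
- by move=> v w ? ?; rewrite (weighted_shift_add wT); exact: laurent_mult_add.
- by move=> a v ?; rewrite (weighted_shift_scale wT); exact: laurent_mult_scale.
move=> k; have := in_class_sh (k := k) G_cl.
rewrite add0r => /(weighted_shift_on_class wT pc)->.
by rewrite sh_sh; apply: laurent_mult_scale; exact: laurent_mult_sh.
Qed.

Lemma in_class_shiftp0 m (P : {poly algC}) : (forall j, P`_j != 0 -> (m %| j)%N) ->
  in_class m%:Z 0 (shiftp 0 P).
Proof.
move=> P_cl i; rewrite /shiftp addr0.
by case: ifP => [_ /P_cl //|]; rewrite eqxx.
Qed.

(** * Submodules *)

Lemma laurent_delta j : laurent (delta j).
Proof. by exists `|j|%N => i ?; rewrite /delta; case: eqP => // ?; lia. Qed.

Lemma delta_neq0 j : delta j <> vzero.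
Proof. by move=> /(congr1 (fun v => v j)); rewrite /delta eqxx => /eqP; rewrite oner_eq0. Qed.

Lemma delta_mem lam S : Hsubspace lam S -> shiftable S ->
  forall w b, S w -> w <> vzero -> in_class 0 b w -> forall j, S (delta j).
Proof.
move=> hS shS w b Sw nz_w w_b j.
have w_supp i : w i != 0 -> i = b by move=> /w_b; rewrite dvd0z subr_eq0 => /eqP.
have nz_wb : w b != 0 by have [i nz_wi] := vec_neq0P nz_w; rewrite -(w_supp _ nz_wi).
have [u Su [c nz_c wu]] := shS (j - b) w Sw.
suff -> : delta j = vscale (c b * w b)^-1 u by exact: (Hsubspace_scale hS _ Su).
apply: vec_ext => i; rewrite /delta /vscale; have := wu (i - (j - b)); rewrite subrK => ->.
have [->|ne] := eqVneq i j.
  by rewrite (_ : j - (j - b) = b) ?mulVf ?mulf_neq0 //; ring.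
have [->|/w_supp ?] := eqVneq (w (i - (j - b))) 0; first by rewrite !mulr0.
by case/eqP: ne; lia.
Qed.

Lemma mem_of_supp lam S : Hsubspace lam S -> (forall j, S (delta j)) ->
  forall n a v, supp_in v a n -> S v.
Proof.
move=> hS Sdelta; elim=> [|n IH] a v v_a.
  suff -> : v = vzero by exact: Hsubspace0 hS.
  by apply: vec_ext => i; apply/eqP; apply: contraT => /v_a; lia.
have -> : v = vadd (fun i => if i == a then 0 else v i) (vscale (v a) (delta a)).
  apply: vec_ext => i; rewrite /vadd /vscale /delta.
  by case: eqVneq => [->|_]; rewrite ?mulr1 ?mulr0 ?add0r ?addr0.
apply: Hsubspace_add hS _ _ _ (Hsubspace_scale hS _ (Sdelta a)).
apply: IH (a + 1) _ _ => i; have [_|ne] := eqVneq i a; first by rewrite eqxx.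
by move=> /v_a; lia.
Qed.

Lemma not_simple_of_sub X Y H S :
  is_submodule X Y H S -> nonzero_sub S -> Defs.proper_sub S -> ~ is_simple X Y H.
Proof. by move=> hS [v [Sv nz_v]] [w [lw nSw]] [_ /(_ S hS) [/(_ v Sv)|/(_ w lw)]]. Qed.

Definition vanish_on (P : pred int) (v : vec) : Prop := laurent v /\ forall l, P l -> v l = 0.

Lemma vanish_on_stable (P : pred int) T c d : weighted_shift T c d ->
  (forall l, P l -> ~~ P (l + d) -> c l = 0) -> forall v, vanish_on P v -> vanish_on P (T v).
Proof.
move=> wT c0 v [lv v0]; split=> [|l Pl]; first exact: weighted_shift_laurent wT _ lv.
by rewrite wT; have [/v0->|/(c0 _ Pl)->] := boolP (P (l + d)); rewrite ?mulr0 ?mul0r.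
Qed.

Lemma vanish_on_no_shift (P : pred int) T c : weighted_shift T c 0 ->
  forall v, vanish_on P v -> vanish_on P (T v).
Proof. by move=> wT; apply: vanish_on_stable wT _ => l Pl; rewrite addr0 Pl. Qed.

Lemma laurent_mult_Xn_subC_proper n a : (0 < n)%N -> a != 0 ->
  Defs.proper_sub (laurent_mult_of ('X^n - a%:P)).
Proof.
move=> n_gt0 nz_a; exists (delta 0); split; first exact: laurent_delta.
move=> [N [r]]; rewrite (delta0_shiftp N) => /shiftp_inj XN.
pose x := n.-root a; have xn : x ^+ n = a by exact: rootCK.
have nz_x : x != 0.
  by apply: contraNneq nz_a => x0; rewrite -xn x0 expr0n gtn_eqF.
have := congr1 (horner^~ x) XN; rewrite hornerM !hornerE xn subrr mulr0.
by move/eqP; rewrite expf_eq0 (negbTE nz_x) andbF.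
Qed.

Lemma Xn_subC_class n a : in_class n%:Z 0 (shiftp 0 ('X^n - a%:P)).
Proof.
apply: in_class_shiftp0 => j; rewrite coefB coefXn coefC.
have [->|_] := eqVneq j n; first by rewrite dvdnn.
by have [->|_] := eqVneq j 0%N; rewrite ?dvdn0 // subr0 eqxx.
Qed.

Definition has_class0_vec (S : vec -> Prop) (m : int) (n : nat) : Prop :=
  exists g, [/\ S g, g <> vzero, in_class m 0 g & supp_in g 0 n].

Lemma dvdz_ge0 (m i : int) : 0 < m -> (m %| i)%Z -> - m < i -> 0 <= i.
Proof.
move=> m_gt0 /dvdzP[q ->]; rewrite pmulr_lge0 // -mulN1r ltr_pM2r //; lia.
Qed.

Lemma class0_vec_of_class S m w b a n : shiftable S -> (0 < m)%N -> S w -> w <> vzero ->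
  in_class m%:Z b w -> supp_in w a n -> has_class0_vec S m%:Z n.
Proof.
move=> shS m_gt0 Sw nz_w w_b w_a; pose r := ((b - a) %% m%:Z)%Z.
have r_ge0 : 0 <= r by apply: modz_ge0; rewrite eqz_nat -lt0n.
have r_lt : r < m%:Z by apply: ltz_pmod; rewrite ltz_nat.
have ba_r : (m%:Z %| b - a - r)%Z.
  by apply/dvdzP; exists ((b - a) %/ m%:Z)%Z; rewrite {1}(divz_eq (b - a) m%:Z) addrK.
have [u Su [c nz_c wu]] := shS (- a - r) w Sw.
have u_w i : u i != 0 -> w (i - (- a - r)) != 0.
  by rewrite -{1}(subrK (- a - r) i) wu mulf_eq0 negb_or => /andP[].
exists u; split=> // [u0|i /u_w /w_b i_b|i /u_w /[dup] /w_a i_a /w_b i_b].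
- have [i nz_wi] := vec_neq0P nz_w; have := wu i; rewrite u0 /vzero => /esym/eqP.
  by rewrite mulf_eq0 (negbTE (nz_c i)) (negbTE nz_wi).
- by rewrite (_ : i - 0 = (i - (- a - r) - b) + (b - a - r)); [apply: rpredD | ring].
- have i_cl : (m%:Z %| i)%Z.
    by rewrite (_ : i = (i - (- a - r) - b) + (b - a - r)); [apply: rpredD | ring].
  have := dvdz_ge0 _ i_cl; rewrite ltz_nat => /(_ m_gt0); lia.
Qed.

Lemma class0_vec_of_nonzero lam S m n a v : Hsubspace lam S -> shiftable S ->
  separates lam m%:Z -> (0 < m)%N -> S v -> v <> vzero -> supp_in v a n ->
  has_class0_vec S m%:Z n.
Proof.
move=> hS shS sep m_gt0 Sv nz_v v_a.
have [w [b [a' [Sw nz_w w_b w_a']]]] := class_reduction hS shS sep Sv nz_v v_a.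
exact: class0_vec_of_class shS m_gt0 Sw nz_w w_b w_a'.
Qed.

Lemma ex_minimal_nat (P : nat -> Prop) :
  (exists n, P n) -> exists n, P n /\ forall k, P k -> (n <= k)%N.
Proof.
move=> exP; have [n [[Pn n_min] _]] :=
  dec_inh_nat_subset_has_unique_least_element P (fun n => classic (P n)) exP.
by exists n; split=> // k /n_min /ssrnat.leP.
Qed.

Lemma class0_vec_poly m g n : (0 < m)%N -> in_class m%:Z 0 g -> supp_in g 0 n ->
  exists q : {poly algC}, shiftp 0 (q \Po 'X^m) = g.
Proof.
move=> m_gt0 g_cl g_n; exists (\poly_(k < n) g (k%:Z * m%:Z)).
apply: vec_ext => i; rewrite /shiftp addr0; case: ifP => [i_ge|i_lt]; last first.
  by apply/esym/eqP; apply: contraFT i_lt => /g_n; lia.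
rewrite coef_comp_poly_Xn // coef_poly; case: ifP => [dvd|ndvd]; last first.
  by apply/esym/eqP; apply: contraFT ndvd => /g_cl; rewrite subr0.
have im : (absz i %/ m)%:Z * m%:Z = i by rewrite -PoszM divnK // gez0_abs.
case: ifP => [_|ge_n]; first by rewrite im.
apply/esym/eqP; apply: contraFT ge_n => /g_n i_n.
by apply: leq_ltn_trans (leq_div _ _) _; lia.
Qed.

Lemma size_le_of_supp (G : {poly algC}) n : supp_in (shiftp 0 G) 0 n -> (size G <= n)%N.
Proof.
move=> G_n; apply/leq_sizeP => j j_ge; apply/eqP; apply: contraT => nz.
by have := G_n j%:Z; rewrite /shiftp addr0 /= => /(_ nz); lia.
Qed.

Lemma laurent_mult_of_euclid lam S G : Hsubspace lam S -> G != 0 ->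
  (forall v, laurent_mult_of G v -> S v) ->
  (forall v a n, S v -> v <> vzero -> supp_in v a n -> (size G <= n)%N) ->
  forall v, S v -> laurent_mult_of G v.
Proof.
move=> hS nz_G GS S_supp_ge v Sv.
have [N /shiftp_of_supp[V v_V _]] := laurent_supp (Hsubspace_laurent hS Sv).
exists N, (V %/ G); suff R0 : V %% G = 0 by rewrite v_V {1}(divp_eq V G) R0 addr0.
apply: contraTeq (ltn_modpN0 V nz_G) => nz_R; rewrite -leqNgt.
apply: (S_supp_ge (shiftp N (V %% G)) (- N%:Z)); last exact: supp_shiftp.
- have -> : V %% G = V + (-1)%:P * (V %/ G * G).
    by rewrite {2}(divp_eq V G) polyCN polyC1 mulN1r addrC addKr.
  rewrite shiftp_add shiftp_scale -v_V.
  by apply: Hsubspace_add hS _ _ Sv (Hsubspace_scale hS _ (GS _ _)); exists N, (V %/ G).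
- by rewrite -(shiftp_poly0 N) => /shiftp_inj/eqP; rewrite (negbTE nz_R).
Qed.

Lemma monomial_of_roots0 (q : {poly algC}) : q != 0 -> (forall a, root q a -> a = 0) ->
  exists c k, c != 0 /\ q = c *: 'X^k.
Proof.
move=> nz_q q_roots; have [r def_q] := closed_field_poly_normal q.
exists (lead_coef q), (size r); split; first by rewrite lead_coef_eq0.
rewrite {1}def_q; congr (_ *: _).
have : all (pred1 0) r.
  apply/allP => a ar; apply/eqP/q_roots.
  by rewrite def_q rootZ ?lead_coef_eq0 // root_prod_XsubC.
elim: r {def_q} => [|a r IH] /=; first by rewrite big_nil.
by rewrite big_cons => /andP[/eqP-> /IH->]; rewrite subr0 exprS.
Qed.

Lemma laurent_mult_monomial c n v : c != 0 -> laurent v -> laurent_mult_of (c *: 'X^n) v.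
Proof.
move=> nz_c /laurent_supp[N /shiftp_of_supp[V -> _]].
exists (N + n)%N, (c^-1%:P * V); rewrite -(shiftp_XnM N n V); congr shiftp.
by rewrite -mul_polyC mulrACA -polyCM mulVf // polyC1 mul1r mulrC.
Qed.

Section WeightedShiftModule.

Variables (lam : int -> algC) (X Y : vec -> vec) (cX cY : int -> algC).
Hypotheses (wX : weighted_shift X cX (-1)) (wY : weighted_shift Y cY 1).
Hypothesis periodic_weights :
  forall k, periodic_mod k lam -> periodic_mod k cX /\ periodic_mod k cY.

Lemma laurent_mult_submodule m G : periodic_mod m lam -> in_class m 0 (shiftp 0 G) ->
  is_submodule X Y (Hop lam) (laurent_mult_of G).
Proof.
move=> plam G_cl; have [pX pY] := periodic_weights plam.
split; first exact: laurent_mult_laurent.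
split; first exact: laurent_mult_zero.
split; first exact: laurent_mult_add.
split; first exact: laurent_mult_scale.
split; first exact: laurent_mult_stable wX pX G_cl.
split; first exact: laurent_mult_stable wY pY G_cl.
exact: laurent_mult_stable (Hop_weighted_shift lam) plam G_cl.
Qed.

Lemma not_simple_of_period k : k != 0 -> (forall i, lam (i + k) = lam i) ->
  ~ is_simple X Y (Hop lam).
Proof.
move=> nz_k per; have k_gt0 : (0 < absz k)%N by rewrite absz_gt0.
have plam : periodic_mod (absz k)%:Z lam := periodic_mod_of_period per.
have sub := laurent_mult_submodule plam (@Xn_subC_class (absz k) 1).
apply: not_simple_of_sub sub _ (laurent_mult_Xn_subC_proper k_gt0 (oner_neq0 _)).
exists (shiftp 0 ('X^(absz k) - 1%:P)); split; first by exists 0%N, 1; rewrite mul1r.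
rewrite -(shiftp_poly0 0) => /shiftp_inj/eqP.
by rewrite -size_poly_eq0 size_XnsubC.
Qed.

Lemma not_simple_of_vanish_on (P : pred int) j j' : P j -> ~~ P j' ->
  (forall l, P l -> ~~ P (l - 1) -> cX l = 0) ->
  (forall l, P l -> ~~ P (l + 1) -> cY l = 0) -> ~ is_simple X Y (Hop lam).
Proof.
move=> Pj nPj' cX0 cY0; apply: (@not_simple_of_sub _ _ _ (vanish_on P)).
- split; first by move=> v [].
  split; first by split=> [|//]; exact: laurent_vzero.
  split.
    move=> v w [lv v0] [lw w0]; split=> [|l Pl]; first exact: laurent_vadd.
    by rewrite /vadd v0 ?w0 ?addr0.
  split; first by move=> a; exact: vanish_on_no_shift (vscale_weighted_shift a).
  split; first exact: vanish_on_stable wX cX0.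
  split; first exact: vanish_on_stable wY cY0.
  exact: vanish_on_no_shift (Hop_weighted_shift lam).
- exists (delta j'); split; last exact: delta_neq0.
  split=> [|l Pl]; first exact: laurent_delta.
  by rewrite /delta ifN //; apply: contraNneq nPj' => <-.
- exists (delta j); split=> [|[_ /(_ j Pj)]]; first exact: laurent_delta.
  by rewrite /delta eqxx => /eqP; rewrite oner_eq0.
Qed.

Lemma not_simple_of_cY_zero j : cY j = 0 -> ~ is_simple X Y (Hop lam).
Proof.
move=> cYj; apply: (@not_simple_of_vanish_on (fun l => l <= j) j (j + 1)) => /=.
- by [].
- by rewrite -ltNge ltzD1.
- by move=> l l_le; rewrite -ltNge; lia.
- by move=> l l_le; rewrite -ltNge => ?; have -> : l = j by lia.
Qed.

Lemma not_simple_of_cX_zero j : cX j = 0 -> ~ is_simple X Y (Hop lam).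
Proof.
move=> cXj; apply: (@not_simple_of_vanish_on (fun l => j <= l) j (j - 1)) => /=.
- by [].
- by rewrite -ltNge; lia.
- by move=> l l_ge; rewrite -ltNge => ?; have -> : l = j by lia.
- by move=> l l_ge; rewrite -ltNge; lia.
Qed.

Section Nonvanishing.

Hypotheses (nz_cX : forall i, cX i != 0) (nz_cY : forall i, cY i != 0).

Lemma submodule_shiftable S : is_submodule X Y (Hop lam) S -> shiftable S.
Proof.
move=> [_ [_ [_ [_ [SX [SY _]]]]]]; apply: shiftable_of_steps => v Sv.
  by exists (X v); [exact: SX | exact: weighted_shift_copy wX nz_cX].
by exists (Y v); [exact: SY | exact: weighted_shift_copy wY nz_cY].
Qed.

Lemma simple_of_aperiodic : is_abs_period lam 0 -> is_simple X Y (Hop lam).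
Proof.
move=> aper; split; first by exists (delta 0); split; [exact: laurent_delta | exact: delta_neq0].
move=> S hS; have [[v [Sv nz_v]]|S0] := classic (nonzero_sub S); last first.
  by left=> v Sv; apply: NNPP => nz_v; apply: S0; exists v.
right; have HS := submodule_Hsubspace hS; have shS := submodule_shiftable hS.
have [N v_N] := laurent_supp (Hsubspace_laurent HS Sv).
have [w [b [_ [Sw nz_w w_b _]]]] :=
  class_reduction HS shS (separates_aperiodic aper) Sv nz_v v_N.
move=> u /laurent_supp[M u_M].
exact: mem_of_supp HS (delta_mem HS shS Sw nz_w w_b) _ _ _ u_M.
Qed.

Lemma sh_mem_of_class m S w b : periodic_mod m lam -> is_submodule X Y (Hop lam) S ->
  S w -> in_class m b w -> forall k, S (sh k w).
Proof.
move=> plam [_ [_ [_ [Sscale [SX [SY _]]]]]] Sw w_b; have [pX pY] := periodic_weights plam.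
have step u c : S u -> in_class m c u -> S (sh 1 u) /\ S (sh (-1) u).
  move=> Su u_c; have := weighted_shift_on_class wX pX u_c; rewrite opprK => Xu.
  have Yu := weighted_shift_on_class wY pY u_c.
  rewrite -[sh 1 u](vscaleK (nz_cX (c + 1))) -[sh (-1) u](vscaleK (nz_cY (c - 1))) -Xu -Yu.
  by split; apply: Sscale; [exact: SX | exact: SY].
elim/int_rect => [|n IH|n IH]; first by rewrite sh0.
  by rewrite -addn1 PoszD addrC -sh_sh; exact: (step _ _ IH (in_class_sh w_b)).1.
by rewrite -addn1 PoszD opprD addrC -sh_sh; exact: (step _ _ IH (in_class_sh w_b)).2.
Qed.

Lemma submodule_eq_laurent_mult f m S : in_Sf f lam -> is_abs_period lam m -> (0 < m)%N ->
  is_submodule X Y (Hop lam) S -> nonzero_sub S ->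
  exists q : {poly algC}, q != 0 /\
    (exists c, Hop lam (shiftp 0 (q \Po 'X^m)) = vscale c (shiftp 0 (q \Po 'X^m))) /\
    (forall v, S v <-> laurent_mult_of (q \Po 'X^m) v).
Proof.
move=> hf per m_gt0 hS [v [Sv nz_v]].
have HS := submodule_Hsubspace hS; have shS := submodule_shiftable hS.
have plam := periodic_mod_abs_period per.
have class0_of u a n : S u -> u <> vzero -> supp_in u a n -> has_class0_vec S m%:Z n.
  exact: class0_vec_of_nonzero HS shS (separates_periodic hf per m_gt0) m_gt0.
have [N v_N] := laurent_supp (Hsubspace_laurent HS Sv).
(* A class-0 vector of S with shortest support generates S. *)
have [D [[g [Sg nz_g g_cl g_D]] D_min]] :=
  ex_minimal_nat (ex_intro _ _ (class0_of _ _ _ Sv nz_v v_N)).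
have [q gq] := class0_vec_poly m_gt0 g_cl g_D.
have nz_G : q \Po 'X^m != 0 by apply/eqP => G0; apply: nz_g; rewrite -gq G0 shiftp_poly0.
exists q; split; first by apply: contraNneq nz_G => ->; rewrite comp_poly0.
split.
  exists (lam 0); rewrite gq (weighted_shift_on_class (Hop_weighted_shift lam) plam g_cl).
  by rewrite subr0 oppr0 sh0.
have GS u : laurent_mult_of (q \Po 'X^m) u -> S u.
  apply: laurent_mult_ind u; [exact: Hsubspace0 HS | exact: Hsubspace_add HS |
    exact: Hsubspace_scale HS | rewrite gq => k; exact: sh_mem_of_class plam hS Sg g_cl k].
move=> u; split=> [|/GS //]; apply: laurent_mult_of_euclid HS nz_G GS _ u.
move=> w a n Sw nz_w w_a; apply: leq_trans (D_min _ (class0_of _ _ _ Sw nz_w w_a)).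
by apply: size_le_of_supp; rewrite gq.
Qed.

Lemma max_submodule_eq f m S : in_Sf f lam -> is_abs_period lam m -> (0 < m)%N ->
  is_max_sub X Y (Hop lam) S ->
  exists a, a != 0 /\ (forall v, S v <-> laurent_mult_of ('X^m - a%:P) v).
Proof.
move=> hf per m_gt0 [hS [nzS [[v [lv nSv]] S_max]]].
have [q [nz_q [_ defS]]] := submodule_eq_laurent_mult hf per m_gt0 hS nzS.
have [[a [nz_a /factor_theorem[r def_q]]]|no_root] := classic (exists a, a != 0 /\ root q a).
  have incl u : S u -> laurent_mult_of ('X^m - a%:P) u.
    move/defS; rewrite def_q comp_polyM comp_polyB comp_polyX comp_polyC.
    exact: laurent_mult_dvd.
  have sub := laurent_mult_submodule (periodic_mod_abs_period per) (@Xn_subC_class m a).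
  have eqS := S_max _ sub incl (laurent_mult_Xn_subC_proper m_gt0 nz_a).
  by exists a; split=> // u; split=> [/incl|/eqS].
have q_roots a : root q a -> a = 0.
  by move=> qa; apply: NNPP => nz_a; apply: no_root; exists a; split=> //; apply/eqP.
have [c [k [nz_c def_q]]] := monomial_of_roots0 nz_q q_roots.
case: nSv; apply/defS; rewrite def_q comp_polyZ comp_Xn_poly -exprM.
exact: laurent_mult_monomial.
Qed.

End Nonvanishing.

Lemma simple_iff : is_simple X Y (Hop lam) <->
  ((forall i, cX i != 0) /\ (forall i, cY i != 0)) /\ is_abs_period lam 0.
Proof.
split=> [hs|[[nz_cX nz_cY] aper]]; last exact: simple_of_aperiodic.
split.
  split=> i; apply/eqP => c0; first exact: not_simple_of_cX_zero c0 hs.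
  exact: not_simple_of_cY_zero c0 hs.
apply: NNPP => /nonzero_period[k nz_k per].
exact: not_simple_of_period nz_k per hs.
Qed.

End WeightedShiftModule.

Lemma A_periodic_weights lam z k : periodic_mod k lam ->
  periodic_mod k (fun=> 1) /\ periodic_mod k (fun i => lam (i + 1) + z).
Proof.
move=> plam; split=> // i j ij; congr (_ + _); apply: plam.
by rewrite opprD addrACA subrr addr0.
Qed.

Lemma B_periodic_weights lam z k : periodic_mod k lam ->
  periodic_mod k (fun i => lam i + z) /\ periodic_mod k (fun=> 1).
Proof. by move=> plam; split=> // i j /plam ->. Qed.

Lemma A_simple_iff lam z : is_simple A_x (A_y lam z) (Hop lam) <->
  (forall i, lam i + z != 0) /\ is_abs_period lam 0.
Proof.
rewrite (simple_iff A_x_weighted_shift (A_y_weighted_shift lam z) (@A_periodic_weights lam z)).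
split=> [[[_ nz] aper]|[nz aper]]; split=> //.
  by move=> i; rewrite -(subrK 1 i); exact: nz.
by split=> i; [exact: oner_neq0 | exact: nz].
Qed.

Lemma B_simple_iff lam z : is_simple (B_x lam z) B_y (Hop lam) <->
  (forall i, lam i + z != 0) /\ is_abs_period lam 0.
Proof.
rewrite (simple_iff (B_x_weighted_shift lam z) B_y_weighted_shift (@B_periodic_weights lam z)).
by split=> [[[nz _] aper]|[nz aper]]; split=> //; split=> // i; exact: oner_neq0.
Qed.

Unset Implicit Arguments.
Theorem lemma7 (f : {poly algC}) (lam : int -> algC) (z : algC) :
  in_Sf f lam ->
  (* (1) *)
  (is_Hf_module f A_x (A_y lam z) (Hop lam) /\
   is_Hf_module f (B_x lam z) B_y (Hop lam)) /\
  (* (2) *)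
  (is_simple A_x (A_y lam z) (Hop lam) <->
     (forall i, lam i + z != 0) /\ is_abs_period lam 0) /\
  (is_simple (B_x lam z) B_y (Hop lam) <->
     (forall i, lam i + z != 0) /\ is_abs_period lam 0) /\
  (* (3) *)
  (forall m : nat, (forall i, lam i + z != 0) -> is_abs_period lam m -> (0 < m)%N ->
    (forall S, is_submodule A_x (A_y lam z) (Hop lam) S -> nonzero_sub S ->
       exists q : {poly algC}, q != 0 /\
         (exists c : algC, Hop lam (shiftp 0 (q \Po 'X^m)) = vscale c (shiftp 0 (q \Po 'X^m))) /\
         (forall v, S v <-> laurent_mult_of (q \Po 'X^m) v)) /\
    (forall S, is_submodule (B_x lam z) B_y (Hop lam) S -> nonzero_sub S ->
       exists q : {poly algC}, q != 0 /\
         (exists c : algC, Hop lam (shiftp 0 (q \Po 'X^m)) = vscale c (shiftp 0 (q \Po 'X^m))) /\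
         (forall v, S v <-> laurent_mult_of (q \Po 'X^m) v)) /\
    (forall S, is_max_sub A_x (A_y lam z) (Hop lam) S ->
       exists a : algC, a != 0 /\
         (forall v, S v <-> laurent_mult_of ('X^m - a%:P) v))).
Proof.
move=> hf; split; first by split; [exact: A_Hf_module | exact: B_Hf_module].
split; first exact: A_simple_iff.
split; first exact: B_simple_iff.
move=> m nz per m_gt0.
have wA := A_y_weighted_shift lam z; have pA := @A_periodic_weights lam z.
have wB := B_x_weighted_shift lam z; have pB := @B_periodic_weights lam z.
have nz1 (i : int) : (1 : algC) != 0 := oner_neq0 _.
have nzA i : lam (i + 1) + z != 0 := nz (i + 1).
split; first by move=> S; exact: submodule_eq_laurent_mult A_x_weighted_shift wA pA nz1 nzA f m S hf per m_gt0.
split; first by move=> S; exact: submodule_eq_laurent_mult wB B_y_weighted_shift pB nz nz1 f m S hf per m_gt0.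
by move=> S; exact: max_submodule_eq A_x_weighted_shift wA pA nz1 nzA f m S hf per m_gt0.
Qed.
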